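(* Let $n\ge 1$ and $0\le k\le n-1$ be integers. The complement $\overline{S^k_{n-k}}$ of the generalized crown graph $S^k_{n-k}$ is word-representable. Explicitly: the graph with vertex set $\{1,\dots,n\}\cup\{1',\dots,n'\}$ in which $\{1,\dots,n\}$ and $\{1',\dots,n'\}$ are cliques and, for $i,j\in\{1,\dots,n\}$, $i$ is adjacent to $j'$ if and only if $j\equiv i+r \pmod n$ for some $r\in\{0,1,\dots,k\}$ (residues taken in $\{1,\dots,n\}$), is word-representable.
   Context: A graph $G=(V,E)$ is word-representable if there exists a word $w$ over the alphabet $V$, containing every letter of $V$ at least once, such that for all distinct $x,y\in V$, the letters $x$ and $y$ alternate in $w$ (i.e., the subword of $w$ obtained by deleting all letters other than $x,y$ has no two equal consecutive letters) if and only if $xy\in E$. The generalized crown graph $S^k_{n-k}$ is the bipartite graph with parts $X=\{1,\dots,n\}$ and $Y=\{1',\dots,n'\}$ obtained from the complete bipartite graph $K_{n,n}$ by deleting, for each $i\in\{1,\dots,n\}$, the edges from $i$ to $j'$ for all $j\equiv i,i+1,\dots,i+k \pmod n$ (with residues in $\{1,\dots,n\}$, i.e. $0'$ means $n'$). For $k=0$ this is the crown graph $H_{n,n}$. *)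

From mathcomp Require Import all_boot.
Set Implicit Arguments. Unset Strict Implicit. Unset Printing Implicit Defensive.

Definition alternate (V : eqType) (w : seq V) (x y : V) : bool :=
  let s := [seq z <- w | (z == x) || (z == y)] in
  sorted (fun a b => a != b) s.

Definition word_representable (V : finType) (E : rel V) : Prop :=
  exists w : seq V,
    (forall v : V, v \in w) /\
    (forall x y : V, x != y -> (alternate w x y <-> E x y)).

(* Vertices: inl i is the
   vertex i+1 of X, inr j is the vertex (j+1)' of Y (0-indexed residues). *)
Definition coCrownAdj (n k : nat) (u v : 'I_n + 'I_n) : bool :=
  match u, v with
  | inl i, inl j => i != j
  | inr i, inr j => i != j
  | inl i, inr j => [exists r : 'I_k.+1, (j : nat) == (i + r) %% n]
  | inr j, inl i => [exists r : 'I_k.+1, (j : nat) == (i + r) %% n]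
  end.
Arguments coCrownAdj n k u v : clear implicits.

From mathcomp Require Import all_boot zify.
Set Implicit Arguments. Unset Strict Implicit. Unset Printing Implicit Defensive.

(* Let D = n - k - 1 and read vertex indices mod n.  The representing word has
   n blocks; block q consists of slots X_0, ..., X_n labelled x_(q+t) and
   Y_0, ..., Y_n labelled y_(q+s), in the order of the X_t with Y_s inserted
   between X_(s+D) and X_(s+D+1).  Consecutive occurrences of any letter are
   separated by every other letter of its own side and, when j - i lies in
   {0, ..., k}, x_i and y_j separate each other.  If j - i is not in that range,
   the two copies X_0 and X_n of x_i in block i enclose only y_i, ..., y_(i+k),
   so x_i and y_j do not alternate. *)

Section SortedWords.
Variables (T V : eqType) (key : T -> nat) (f : T -> V).

Lemma key_ltn_trans : transitive (relpre key ltn).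
Proof. by move=> y x z /= /ltn_trans; apply. Qed.

Lemma sorted_map_neqP (s : seq T) : sorted (relpre key ltn) s ->
  sorted (fun a b => a != b) (map f s) <->
  (forall z1 z2, z1 \in s -> z2 \in s -> key z1 < key z2 -> f z1 = f z2 ->
     exists2 z, z \in s & [/\ key z1 < key z, key z < key z2 & f z != f z1]).
Proof.
elim: s => [|z s IHs] /= sorted_zs; first by split=> // _ z1 z2.
have z_min : all (fun y => key z < key y) s := order_path_min key_ltn_trans sorted_zs.
have {}IHs := IHs (path_sorted sorted_zs).
case: s => [|y s] in sorted_zs z_min IHs *.
  by split=> // _ z1 z2; rewrite !inE => /eqP-> /eqP->; rewrite ltnn.
have /andP[zy _] := z_min; move: sorted_zs => /= /andP[_ sorted_ys].
have y_min := order_path_min key_ltn_trans sorted_ys.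
split.
- move=> /andP[fzy /IHs sep] z1 z2; rewrite [z1 \in _]inE [z2 \in _]inE.
  case/predU1P=> [->|z1s]; case/predU1P=> [->|z2s]; rewrite ?ltnn //.
  + move=> _ fz2; move: z2s; rewrite inE => /predU1P[z2y|z2s].
      by move: fzy; rewrite fz2 z2y eqxx.
    exists y; first exact: predU1r _ _ (mem_head _ _).
    by split; rewrite 1?eq_sym //; exact: (allP y_min).
  + by move/(allP z_min): z1s; lia.
  + move=> lt feq; have [w ws hw] := sep z1 z2 z1s z2s lt feq.
    by exists w => //; apply: predU1r.
- move=> sep; apply/andP; split.
    apply/eqP=> fzy; have [w] := sep z y (mem_head _ _) (predU1r _ _ (mem_head _ _)) zy fzy.
    rewrite !inE => /predU1P[->|/predU1P[->|ws]] [] //; rewrite ?ltnn // => _ wy.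
    by move/(allP y_min): ws => /=; lia.
  apply/IHs => z1 z2 z1s z2s lt feq.
  have [w] := sep z1 z2 (predU1r _ _ z1s) (predU1r _ _ z2s) lt feq.
  rewrite inE => /predU1P[->|ws]; last by exists w.
  by case=> zz1; move/(allP z_min): z1s; lia.
Qed.

Definition separates (s : seq T) (c d : V) : Prop :=
  forall z1 z2, z1 \in s -> z2 \in s -> key z1 < key z2 -> f z1 = c -> f z2 = c ->
    exists2 z, z \in s & [/\ key z1 < key z, key z < key z2 & f z = d].

Lemma alternate_sortedP (s : seq T) (c d : V) : sorted (relpre key ltn) s -> c != d ->
  alternate (map f s) c d <-> separates s c d /\ separates s d c.
Proof.
move=> sorted_s cd; rewrite /alternate filter_map.
rewrite (sorted_map_neqP (sorted_filter key_ltn_trans _ sorted_s)).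
split=> [sep | [sep_cd sep_dc] z1 z2].
  split=> z1 z2 z1s z2s lt fz1 fz2; have [||||w] := sep z1 z2;
    rewrite ?mem_filter /= ?fz1 ?fz2 ?z1s ?z2s ?eqxx ?orbT //;
    case/andP=> Pw ws [? ? fw]; exists w => //; split=> //;
    by case/orP: Pw fw => /eqP->; rewrite ?eqxx.
rewrite !mem_filter => /andP[Pz1 z1s] /andP[_ z2s] lt fz12.
case/orP: Pz1 => /eqP fz1; have fz2 := etrans (esym fz12) fz1.
  have [w ws [? ? fw]] := sep_cd z1 z2 z1s z2s lt fz1 fz2.
  by exists w; [rewrite mem_filter /= fw eqxx orbT | split; rewrite // fw fz1 eq_sym].
have [w ws [? ? fw]] := sep_dc z1 z2 z1s z2s lt fz1 fz2.
by exists w; [rewrite mem_filter /= fw eqxx | split; rewrite // fw fz1].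
Qed.
End SortedWords.

Lemma alternate_sym (V : eqType) (w : seq V) (x y : V) : alternate w x y = alternate w y x.
Proof. by rewrite /alternate; congr sorted; apply: eq_filter => z; rewrite orbC. Qed.

Lemma sort_enum_sorted (T : finType) (key : T -> nat) : injective key ->
  sorted (relpre key ltn) (sort (relpre key leq) (enum T)).
Proof.
move=> key_inj; rewrite -sorted_map ltn_sorted_uniq_leq map_inj_uniq // sort_uniq enum_uniq.
by rewrite sorted_map; apply: sort_sorted => x y; exact: leq_total.
Qed.

Lemma lex_ltnP (M q1 q2 e1 e2 : nat) : e1 < M -> e2 < M ->
  q1 * M + e1 < q2 * M + e2 <-> q1 < q2 \/ q1 = q2 /\ e1 < e2.
Proof. by move=> *; split; nia. Qed.

Lemma modn_lt_double_eq (n m a : nat) : m < n.*2 -> a < n -> m %% n = a <-> m = a \/ m = a + n.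
Proof.
move=> m_lt a_lt; case: (ltnP m n) => [m_lt_n | n_le_m]; first by rewrite modn_small; lia.
by rewrite -(subnK n_le_m) modnDr modn_small; lia.
Qed.

(* The slot (q, true, t) is X_t and (q, false, t) is Y_t of block q; the word
   reads the slots in increasing [slot_key]. *)
Section CrownWord.
Variables (n k : nat) (n_gt0 : 0 < n).

Local Notation D := (n - k.+1).

Definition slot := ('I_n * bool * 'I_n.+1)%type.
Definition ord_mod (m : nat) : 'I_n := Ordinal (ltn_pmod m n_gt0).
Definition vertex_of (b : bool) (a : 'I_n) : 'I_n + 'I_n := if b then inl a else inr a.
Definition slot_label (z : slot) : 'I_n + 'I_n :=
  let: (q, b, t) := z in vertex_of b (ord_mod (q + t)).
Definition local_key (b : bool) (t : nat) : nat := if b then t.*2 else (t + D).*2.+1.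
Definition slot_key (z : slot) : nat := let: (q, b, t) := z in q * (4 * n) + local_key b t.
Definition crown_slots : seq slot := sort (relpre slot_key leq) (enum {: slot}).
Definition crown_word : seq ('I_n + 'I_n) := map slot_label crown_slots.

Local Notation separated := (separates slot_key slot_label crown_slots).

Lemma local_key_lt b (t : 'I_n.+1) : local_key b t < 4 * n.
Proof. by have := ltn_ord t; case: b => /=; lia. Qed.

Lemma ltn_local_key b t1 t2 : (local_key b t1 < local_key b t2) = (t1 < t2).
Proof. by case: b; rewrite /= ?ltnS ltn_double ?ltn_add2r. Qed.

Lemma slot_key_ltP q1 b1 t1 q2 b2 t2 :
  slot_key (q1, b1, t1) < slot_key (q2, b2, t2) <->
  q1 < q2 \/ q1 = q2 :> nat /\ local_key b1 t1 < local_key b2 t2.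
Proof. exact: lex_ltnP (local_key_lt _ _) (local_key_lt _ _). Qed.

Lemma slot_key_inj : injective slot_key.
Proof.
move=> [[q1 b1] t1] [[q2 b2] t2] eq12.
have [] : ~ slot_key (q1, b1, t1) < slot_key (q2, b2, t2) /\
          ~ slot_key (q2, b2, t2) < slot_key (q1, b1, t1) by rewrite eq12 ltnn.
rewrite !slot_key_ltP => lt12 lt21 {eq12}.
have <- : q1 = q2 by apply: ord_inj; lia.
have <- : t1 = t2 by apply: ord_inj; case: b1 b2 lt12 lt21 => -[] /=; lia.
by case: b1 b2 lt12 lt21 => -[] //=; lia.
Qed.

Lemma crown_slots_sorted : sorted (relpre slot_key ltn) crown_slots.
Proof. exact: sort_enum_sorted slot_key_inj. Qed.

Lemma mem_crown_slots z : z \in crown_slots.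
Proof. by rewrite mem_sort mem_enum. Qed.

Lemma vertex_of_inj b a b' a' : vertex_of b a = vertex_of b' a' -> b = b' /\ a = a'.
Proof. by case: b b' => -[] // [->]. Qed.

Lemma slot_labelE q b (t : 'I_n.+1) b' (a : 'I_n) :
  slot_label (q, b, t) = vertex_of b' a <-> b = b' /\ (q + t = a \/ q + t = a + n).
Proof.
rewrite -modn_lt_double_eq ?ltn_ord //; last by have := ltn_ord q; have := ltn_ord t; lia.
split=> [/vertex_of_inj[-> <-] // | [-> mod_eq]].
by congr vertex_of; apply: ord_inj.
Qed.

Lemma separated_same_side b (a a' : 'I_n) : a != a' ->
  separated (vertex_of b a) (vertex_of b a').
Proof.
move=> /eqP aa' [[[q1 q1_lt] b1] [t1 t1_lt]] [[[q2 q2_lt] b2] [t2 t2_lt]] _ _.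
move=> /slot_key_ltP lt12 /slot_labelE[eb1 at1] /slot_labelE[eb2 at2]; subst b1 b2.
rewrite ltn_local_key /= in lt12 at1 at2.
have {}aa' : (a : nat) <> a' by move=> /ord_inj.
have := ltn_ord a; have := ltn_ord a' => a'_lt a_lt.
have [u [a'u u_lt]] : exists u, (q1 + u = a' \/ q1 + u = a' + n) /\ u < n.
  by case: (leqP q1 a') => h; [exists (a' - q1) | exists (a' + n - q1)]; lia.
have [q [t [q_lt t_le a't lo hi]]] : exists q t, [/\ q < n, t <= n, q + t = a' \/ q + t = a' + n,
    q1 < q \/ q1 = q /\ t1 < t & q < q2 \/ q = q2 /\ t < t2].
  case: (ltnP t1 u) => [t1u | ut1]; first by exists q1, u; split; lia.
  case: (posnP u) => [u0 | u_gt0]; first by exists q1, n; split; lia.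
  by exists q1.+1, u.-1; split; lia.
exists (Ordinal q_lt, b, Ordinal (t_le : t < n.+1)); first exact: mem_crown_slots.
by split; [apply/slot_key_ltP | apply/slot_key_ltP | apply/slot_labelE]; rewrite /= ?ltn_local_key.
Qed.

Lemma separated_XY (i j : 'I_n) (r : 'I_k.+1) : k < n -> (j : nat) = (i + r) %% n ->
  separated (vertex_of true i) (vertex_of false j).
Proof.
move=> k_lt_n j_eq [[[q1 q1_lt] b1] [t1 t1_lt]] [[[q2 q2_lt] b2] [t2 t2_lt]] _ _.
move=> /slot_key_ltP lt12 /slot_labelE[eb1 it1] /slot_labelE[eb2 it2]; subst b1 b2.
rewrite ltn_local_key /= in lt12 it1 it2.
have := ltn_ord i; have := ltn_ord j; have := ltn_ord r => r_lt j_lt i_lt.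
have ir_j : i + r = j \/ i + r = j + n by rewrite -modn_lt_double_eq //; lia.
have [q [s [q_lt s_le js lo hi]]] : exists q s, [/\ q < n, s <= n, q + s = j \/ q + s = j + n,
    q1 < q \/ q1 = q /\ t1 <= s + D & q < q2 \/ q = q2 /\ s + D < t2].
  by case: (leqP (t1 + r) n) => h; [exists q1, (t1 + r) | exists q1.+1, (t1 + r - n.+1)]; split; lia.
exists (Ordinal q_lt, false, Ordinal (s_le : s < n.+1)); first exact: mem_crown_slots.
by split; [apply/slot_key_ltP | apply/slot_key_ltP | apply/slot_labelE]; rewrite /=; lia.
Qed.

Lemma separated_YX (i j : 'I_n) (r : 'I_k.+1) : k < n -> (j : nat) = (i + r) %% n ->
  separated (vertex_of false j) (vertex_of true i).
Proof.
move=> k_lt_n j_eq [[[q1 q1_lt] b1] [t1 t1_lt]] [[[q2 q2_lt] b2] [t2 t2_lt]] _ _.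
move=> /slot_key_ltP lt12 /slot_labelE[eb1 jt1] /slot_labelE[eb2 jt2]; subst b1 b2.
rewrite ltn_local_key /= in lt12 jt1 jt2.
have := ltn_ord i; have := ltn_ord j; have := ltn_ord r => r_lt j_lt i_lt.
have ir_j : i + r = j \/ i + r = j + n by rewrite -modn_lt_double_eq //; lia.
have [q [t [q_lt t_le it lo hi]]] : exists q t, [/\ q < n, t <= n, q + t = i \/ q + t = i + n,
    q1 < q \/ q1 = q /\ t1 + D < t & q < q2 \/ q = q2 /\ t <= t2 + D].
  by case: (leqP t1 r) => h; [exists q1, (t1 + n - r) | exists q1.+1, (t1 - r.+1)]; split; lia.
exists (Ordinal q_lt, true, Ordinal (t_le : t < n.+1)); first exact: mem_crown_slots.
by split; [apply/slot_key_ltP | apply/slot_key_ltP | apply/slot_labelE]; rewrite /=; lia.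
Qed.

Lemma not_separated_XY (i j : 'I_n) : (forall r : 'I_k.+1, (j : nat) != (i + r) %% n) ->
  ~ separated (vertex_of true i) (vertex_of false j).
Proof.
move=> no_edge separated_ij.
have := ltn_ord i; have := ltn_ord j => j_lt i_lt.
have ends_lt : slot_key (i, true, ord0) < slot_key (i, true, ord_max).
  by apply/slot_key_ltP => /=; lia.
have [label0 labeln] : slot_label (i, true, ord0) = vertex_of true i /\
                       slot_label (i, true, ord_max) = vertex_of true i.
  by split; apply/slot_labelE => /=; lia.
have [[[q b] t] _ []] :=
  separated_ij _ _ (mem_crown_slots _) (mem_crown_slots _) ends_lt label0 labeln.
move=> /slot_key_ltP lo /slot_key_ltP hi /slot_labelE[eb jt]; subst b.
have t_le_k : t < k.+1 by move: lo hi => /=; lia.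
have it_j : (i + t) %% n = j by rewrite modn_lt_double_eq //=; lia.
by move: (no_edge (Ordinal t_le_k)); rewrite /= it_j eqxx.
Qed.

Lemma mem_crown_word b a : vertex_of b a \in crown_word.
Proof.
apply/mapP; exists (a, b, ord0); first exact: mem_crown_slots.
by apply/esym/slot_labelE; split=> //; left; exact: addn0.
Qed.

Lemma crown_word_alternate_same_side b (a a' : 'I_n) : a != a' ->
  alternate crown_word (vertex_of b a) (vertex_of b a').
Proof.
move=> aa'; rewrite (alternate_sortedP slot_label crown_slots_sorted); last by case: b.
by split; apply: separated_same_side; rewrite // eq_sym.
Qed.

Lemma crown_word_alternate_XY : k < n -> forall i j : 'I_n,
  alternate crown_word (inl i) (inr j) <-> coCrownAdj n k (inl i) (inr j).
Proof.
move=> k_lt_n i j; rewrite (alternate_sortedP slot_label crown_slots_sorted) //=.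
split=> [[separated_ij _] | /existsP[r /eqP j_eq]].
  by apply: contraT => /existsPn no_edge; case: (not_separated_XY no_edge separated_ij).
by split; [exact: separated_XY k_lt_n j_eq | exact: separated_YX k_lt_n j_eq].
Qed.

End CrownWord.

Theorem mainTheorem5 (n k : nat) (hn : 1 <= n) (hk : k <= n - 1) :
  word_representable (coCrownAdj n k).
Proof.
have k_lt_n : k < n by lia.
exists (crown_word k hn); split.
  by case=> a; [exact: (mem_crown_word k hn true) | exact: (mem_crown_word k hn false)].
have alternate_XY := crown_word_alternate_XY hn k_lt_n.
case=> [i|j] [i'|j'] /= neq.
- by split=> // _; exact: (crown_word_alternate_same_side k hn true neq).
- exact: alternate_XY.
- by rewrite alternate_sym; exact: alternate_XY.
- by split=> // _; exact: (crown_word_alternate_same_side k hn false neq).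
Qed.
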